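(* If $X$ is a Tychonoff $P$-space, then $T''(X)$ is a (Von Neumann) regular ring.
   Context: $C(X)$ is the ring of real-valued continuous functions on $X$; a cozero set is a set $\{x: h(x)\neq 0\}$ with $h\in C(X)$. $T''(X)$ is the ring (under pointwise operations) of all functions $f\colon X\to\mathbb{R}$ for which there is a dense cozero set $U$ of $X$ with $f|_U$ continuous. A commutative ring $R$ is regular if for each $a\in R$ there is $x\in R$ with $a=a^2x$. A $P$-space is a Tychonoff space in which every zero set is open. *)

From HB Require Import structures.
From mathcomp Require Import all_boot all_order all_algebra.
From mathcomp Require Import all_classical all_reals all_analysis.
Unset Printing Implicit Defensive.
Import Order.TTheory GRing.Theory Num.Theory.
Import numFieldNormedType.Exports.
Local Open Scope classical_set_scope.
Local Open Scope ring_scope.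

Definition completely_regular (R : realType) (X : topologicalType) :=
  forall (B : set X) (x : X), closed B -> ~ B x ->
  exists f : X -> R, continuous f /\ (forall y, 0 <= f y <= 1) /\
    f x = 0 /\ (forall y, B y -> f y = 1).

Definition tychonoff (R : realType) (X : topologicalType) :=
  completely_regular R X /\ accessible_space X.

Definition zero_set (R : realType) (X : topologicalType) (h : X -> R) : set X :=
  [set x | h x = 0].
Definition cozero_set (R : realType) (X : topologicalType) (h : X -> R) : set X :=
  [set x | h x != 0].

Definition is_cozero (R : realType) (X : topologicalType) (U : set X) :=
  exists h : X -> R, continuous h /\ U = cozero_set R X h.

Definition P_space (R : realType) (X : topologicalType) :=
  tychonoff R X /\
  (forall h : X -> R, continuous h -> open (zero_set R X h)).

(* T''(X): functions f : X -> R for which some dense cozero set U has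
   f|_U continuous (continuity of the restriction to the subspace U). *)
Definition T2 (R : realType) (X : topologicalType) : set (X -> R) :=
  [set f | exists U : set X, is_cozero R X U /\ dense U /\ {within U, continuous f}].

Definition regular_fun_ring (R : realType) (X : Type) (S : set (X -> R)) :=
  forall a, S a -> exists x, S x /\ a = (fun t => a t ^+ 2 * x t).

From HB Require Import structures.
From mathcomp Require Import all_boot all_order all_algebra.
From mathcomp Require Import all_classical all_reals all_analysis.
Import Order.TTheory GRing.Theory Num.Theory.
Import numFieldNormedType.Exports.
Local Open Scope classical_set_scope.
Local Open Scope ring_scope.

(* In a P-space every cozero set V = coz(h) is clopen, so a function f that is
   continuous on V extends by 0 to a continuous g on X.  The pointwise inverse
   g^-1 (with 0^-1 = 0) is again continuous: near a point where g vanishes it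
   is 0 on the open zero set of g.  Hence f^-1 is continuous on the same dense
   cozero set V, lies in T''(X), and f = f^2 f^-1 pointwise. *)

Lemma mulf_sqrV (F : fieldType) (x : F) : x = x ^+ 2 * x^-1.
Proof. by have [->|x0] := eqVneq x 0; rewrite ?invr0 ?mulr0 // expr2 mulfK. Qed.

Lemma clopen_patch_continuous (T U : topologicalType) (A : set T) (d f : T -> U) :
  closed A -> closed (~` A) ->
  {within A, continuous f} -> {within ~` A, continuous d} ->
  continuous (patch d A f).
Proof.
move=> cA cAC fA dAC; apply/continuous_subspace_setT; rewrite -(setUv A).
apply: withinU_continuous => //.
  by apply: subspace_eq_continuous fA => x Ax; rewrite /from_subspace patchT.
by apply: subspace_eq_continuous dAC => x AClx; rewrite /from_subspace patchC.
Qed.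

Section ZeroSets.
Context {R : realType} {X : topologicalType}.

Lemma zero_setC (h : X -> R) :
  ~` zero_set R X h = cozero_set R X h.
Proof. by apply/seteqP; split => x /= /eqP. Qed.

Lemma closed_zero_set (h : X -> R) :
  continuous h -> closed (zero_set R X h).
Proof.
move=> hc; apply: (@preimage_closed _ _ h [set r | r = 0]); last exact: closed_eq.
by move=> x _; exact: hc.
Qed.

Lemma continuousV_open_zero_set (h : X -> R) :
  open (zero_set R X h) -> continuous h -> continuous (fun x => (h x)^-1).
Proof.
move=> oZ hc x; have [hx0|hx0] := eqVneq (h x) 0; last exact: continuousV hx0 (hc x).
apply: cvg_near_cst; have : nbhs x (zero_set R X h) by exact: open_nbhs_nbhs.
by apply: filterS => y /= ->; rewrite hx0.
Qed.

End ZeroSets.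

Theorem theorem3p0 (R : realType) (X : topologicalType) :
  P_space R X -> regular_fun_ring R X (T2 R X).
Proof.
move=> [_ open_zero] f [_ [[h [hc ->]] [dense_coz fc]]].
set V := cozero_set R X h.
have closedV : closed V by rewrite /V -zero_setC closedC; exact: open_zero.
have closedVC : closed (~` V) by rewrite /V -zero_setC setCK; exact: closed_zero_set.
pose g := patch (fun=> 0) V f.
have gc : continuous g.
  apply: clopen_patch_continuous closedV closedVC fc _.
  by apply: continuous_subspaceT; exact: cst_continuous.
exists (fun x => (f x)^-1); split; last by apply: funext => x; exact: mulf_sqrV.
exists V; split; first by exists h.
split => //.
have gVc := continuousV_open_zero_set g (open_zero g gc) gc.
apply: (@subspace_eq_continuous _ V _ (fun x => (g x)^-1)).
  by move=> x Vx; rewrite /from_subspace /g patchT.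
exact: continuous_subspaceT.
Qed.
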